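(* Let $F$, $H$ and $R$ be fixed monic polynomials in $\mathbb{F}_q[T]$ with $F\mid R$, and let $z$ be a non-negative integer with $z<\deg(R)$. Then \[ \sum_{\substack{A,B\in\mathbb{A}^+\\ \deg(AB)=z\\ AH\equiv B\ (\mathrm{mod}\ F)\\ AH\neq B\\ (ABH,R)=1}}\frac{1}{|AB|^{\frac{1}{2}}}\ll\frac{q^{\frac{z}{2}}(z+1)|H|}{|F|}. \]
   Context: $q$ is a power of an odd prime, $\mathbb{A}=\mathbb{F}_q[T]$, $\mathbb{A}^+$ is the set of monic polynomials in $\mathbb{A}$, and $|f|=q^{\deg(f)}$ for $f\in\mathbb{A}$. *)

From HB Require Import structures.
From mathcomp Require Import all_boot all_order all_algebra.
Set Implicit Arguments. Unset Strict Implicit. Unset Printing Implicit Defensive.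
Import Order.TTheory GRing.Theory Num.Theory.
Local Open Scope ring_scope.

(* All polynomials over the finite field K of size <= n (i.e. degree < n),
   listed without repetition: the coefficient vector c ranges over K^n. *)
Definition polys_upto (K : finFieldType) (n : nat) : seq {poly K} :=
  [seq \poly_(i < n) (c : seq K)`_i | c : n.-tuple K].

Definition pnorm (rT : rcfType) (K : finFieldType) (f : {poly K}) : rT :=
  (#|K|%:R) ^+ (size f).-1.

Definition pdeg (K : finFieldType) (f : {poly K}) : nat := (size f).-1.

(* The sum of Lemma 3.3: monic A, B with deg(AB) = z (so deg A, deg B <= z),
   AH = B mod F, AH <> B, (ABH, R) = 1, of 1/|AB|^(1/2). *)
Definition S33 (rT : rcfType) (K : finFieldType) (F H R : {poly K}) (z : nat) : rT :=
  \sum_(A <- polys_upto K z.+1)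
    \sum_(B <- polys_upto K z.+1 |
          [&& A \is monic, B \is monic, pdeg (A * B) == z,
              F %| A * H - B, A * H != B & coprimep (A * B * H) R])
      1 / Num.sqrt (pnorm rT (A * B)).

From HB Require Import structures.
From mathcomp Require Import all_boot all_order all_algebra.
From mathcomp Require Import zify ring.
Import Order.TTheory GRing.Theory Num.Theory.
Set Implicit Arguments. Unset Strict Implicit. Unset Printing Implicit Defensive.
Local Open Scope ring_scope.

(* Every term of the sum equals q^(-z/2), so it suffices to count the pairs
   (A, B).  Write a = deg A, b = deg B = z - a, f = deg F and h = deg H; at most
   q^(a + b + h - f) pairs satisfy F | AH - B and AH <> B.  If f <= b, then B is
   determined by A and B div F, since B mod F = AH mod F: at most q^(a + b - f)
   pairs.  If b < f, then deg (AH - B) >= f > deg B, so AH - B is monic of degree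
   a + h and G = (AH - B) / F is monic of degree a + h - f; as AH = GF + B, the
   pair (B, G) determines A: at most q^(b + a + h - f) pairs.  Summing over the
   z + 1 values of a gives the bound with constant 1, without using the
   coprimality condition, the parity of q or the hypotheses on R. *)

Lemma size_monic_pred (R : nzSemiRingType) (p : {poly R}) :
  p \is monic -> size p = (size p).-1.+1.
Proof. by move/monic_neq0; rewrite -size_poly_gt0 => /prednK. Qed.

Section MonicCoefficients.
Variable R : finNzRingType.

Lemma monic_coef_inj n (p q : {poly R}) :
  p \is monic -> q \is monic -> size p = n.+1 -> size q = n.+1 ->
  (forall i, (i < n)%N -> p`_i = q`_i) -> p = q.
Proof.
have lead1 r : r \is monic -> size r = n.+1 -> r`_n = 1.
  by move=> /monicP <- sr; rewrite lead_coefE sr.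
move=> mp mq sp sq eq_low; apply/polyP => i.
case: (ltngtP i n) => [lt_in | lt_ni | ->]; first exact: eq_low.
  by rewrite !nth_default ?sp ?sq.
by rewrite !lead1.
Qed.

Lemma card_le_monic_pairs (T : finType) (S : {pred T}) (U V : T -> {poly R}) u v :
  {in S, forall x, [/\ U x \is monic, size (U x) = u.+1,
                      V x \is monic & size (V x) = v.+1]} ->
  {in S &, injective (fun x => (U x, V x))} ->
  (#|S| <= #|R| ^ (u + v))%N.
Proof.
move=> monicUV injUV.
pose coefs n (p : {poly R}) : n.-tuple R := [tuple p`_i | i < n].
have coefs_inj n p q : p \is monic -> q \is monic -> size p = n.+1 -> size q = n.+1 ->
    coefs n p = coefs n q -> p = q.
  move=> mp mq sp sq eq_low; apply: (monic_coef_inj mp mq sp sq) => i lt_in.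
  by have := congr1 (fun t => tnth t (Ordinal lt_in)) eq_low; rewrite !tnth_mktuple.
rewrite expnD -!card_tuple -card_prod.
apply: (@leq_card_in _ _ (fun x => (coefs u (U x), coefs v (V x)))) => x y Sx Sy eUV.
have eU := congr1 fst eUV; have eV := congr1 snd eUV.
have [mUx sUx mVx sVx] := monicUV x Sx; have [mUy sUy mVy sVy] := monicUV y Sy.
apply: injUV => //; congr (_, _).
  exact: (coefs_inj _ _ _ mUx mUy sUx sUy eU).
exact: (coefs_inj _ _ _ mVx mVy sVx sVy eV).
Qed.

End MonicCoefficients.

Section MonicDivision.
Variable K : fieldType.
Implicit Types p q d : {poly K}.

Lemma modp_eq_dvdp_sub p q d : d %| p - q -> p %% d = q %% d.
Proof.
move=> dvd_pq; apply/eqP; rewrite -subr_eq0 -modpN -modpD.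
exact/eqP/modp_eq0P.
Qed.

Lemma monicBl p q : (size q < size p)%N -> p \is monic -> p - q \is monic.
Proof. by move=> lt_qp /monicP lp; apply/monicP; rewrite lead_coefDl ?size_polyN. Qed.

Lemma monic_divp p d :
  p \is monic -> d \is monic -> (size d <= size p)%N -> p %/ d \is monic.
Proof.
move=> mp md le_dp.
have d_neq0 := monic_neq0 md.
have q_gt0 : (0 < size (p %/ d)%R)%N by rewrite size_poly_gt0 divpN0.
have lt_mod : (size (p %% d)%R < size d)%N by rewrite ltn_modp.
have lt_rem : (size (p %% d)%R < size (p %/ d * d)%R)%N.
  rewrite size_Mmonic -?size_poly_gt0 // -(prednK q_gt0) addSn /=.
  exact: leq_trans lt_mod (leq_addl _ _).
apply/monicP; rewrite -(lead_coef_Mmonic _ md) -(monicP mp).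
by rewrite {2}(divp_eq p d) lead_coefDl.
Qed.

Lemma monic_divp_sub (F P Q : {poly K}) :
  F \is monic -> P \is monic -> F %| P - Q -> P != Q -> (size Q < size F)%N ->
  [/\ (P - Q) %/ F \is monic, size ((P - Q) %/ F) = (size P - (size F).-1)%N
    & (size F <= size P)%N].
Proof.
move=> mF mP dvd_PQ neq_PQ lt_QF.
have le_F_PQ : (size F <= size (P - Q)%R)%N by apply: dvdp_leq; rewrite ?subr_eq0.
have lt_QP : (size Q < size P)%N.
  rewrite ltnNge; apply/negP => le_PQ.
  have := leq_trans le_F_PQ (size_polyD P (- Q)).
  by rewrite size_polyN (maxn_idPr le_PQ) leqNgt lt_QF.
have size_PQ : size (P - Q) = size P by rewrite size_polyDl ?size_polyN.
rewrite -size_PQ; split=> //.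
  by apply: monic_divp; rewrite ?monicBl.
by rewrite size_divp ?monic_neq0.
Qed.

End MonicDivision.

Section CongruentPairs.
Variables (K : finFieldType) (T : finType) (S : {pred T}) (A B : T -> {poly K}).
Variables (F H : {poly K}) (a b : nat).
Hypotheses (monicF : F \is monic) (monicH : H \is monic).
Hypothesis monicAB : {in S, forall x, [/\ A x \is monic, size (A x) = a.+1,
                                         B x \is monic & size (B x) = b.+1]}.
Hypothesis congrAB : {in S, forall x, F %| A x * H - B x}.
Hypothesis injAB : {in S &, injective (fun x => (A x, B x))}.

Local Notation q := #|K|.
Local Notation f := (size F).-1.
Local Notation h := (size H).-1.

Lemma card_congr_pairs_le_degF_leq_degB : (f <= b)%N -> (#|S| <= q ^ (a + (b - f)))%N.
Proof.
move=> le_fb; have size_F := size_monic_pred monicF.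
apply: (card_le_monic_pairs (U := A) (V := fun x => B x %/ F)).
  move=> x /monicAB [mA sA mB sB]; split=> //.
    by apply: monic_divp; rewrite // sB size_F ltnS.
  by rewrite size_divp ?monic_neq0 // sB subSn.
move=> x y Sx Sy /= [eA eQ]; apply: injAB => //=; congr (_, _) => //.
rewrite (divp_eq (B x) F) (divp_eq (B y) F) eQ.
by rewrite -(modp_eq_dvdp_sub (congrAB Sx)) -(modp_eq_dvdp_sub (congrAB Sy)) eA.
Qed.

Lemma card_congr_pairs_le_degB_lt_degF :
  {in S, forall x, A x * H != B x} -> (b < f)%N -> (#|S| * q ^ f <= q ^ (a + b + h))%N.
Proof.
move=> neqAB lt_bf.
have [x0 Sx0 | S0] := pickP (mem S); last by rewrite (eq_card0 S0).
have size_F := size_monic_pred monicF; have size_H := size_monic_pred monicH.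
pose G x := (A x * H - B x) %/ F.
have monicG x : x \in S -> [/\ G x \is monic, size (G x) = (a + h - f).+1%N & (f <= a + h)%N].
  move=> Sx; have [mA sA mB sB] := monicAB Sx.
  have size_AH : size (A x * H) = (a + h).+1%N.
    by rewrite size_monicM ?monic_neq0 // sA size_H addSn addnS.
  have mAH : A x * H \is monic by rewrite monicMl.
  have lt_BF : (size (B x) < size F)%N by rewrite sB size_F ltnS.
  have [mG sG le_F] := monic_divp_sub monicF mAH (congrAB Sx) (neqAB x Sx) lt_BF.
  rewrite size_AH size_F ltnS in le_F.
  by rewrite /G sG size_AH subSn.
have [_ _ le_f] := monicG x0 Sx0.
have AH_eq x : x \in S -> A x * H = G x * F + B x.
  by move=> Sx; rewrite divpK ?congrAB // subrK.
have card_S : (#|S| <= q ^ (b + (a + h - f)))%N.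
  apply: (card_le_monic_pairs (U := B) (V := G)).
    by move=> x Sx; have [? ? ? ?] := monicAB Sx; have [? ? _] := monicG x Sx.
  move=> x y Sx Sy /= [eB eG]; apply: injAB => //=; congr (_, _) => //.
  by apply: (mulIf (monic_neq0 monicH)); rewrite !AH_eq // eB eG.
apply: leq_trans (leq_mul card_S (leqnn _)) _.
by rewrite -expnD (_ : b + _ + f = a + b + h)%N //; lia.
Qed.

Lemma card_congr_pairs_le :
  {in S, forall x, A x * H != B x} -> (#|S| * q ^ f <= q ^ (a + b + h))%N.
Proof.
move=> neqAB; have [le_fb | lt_bf] := leqP f b; last exact: card_congr_pairs_le_degB_lt_degF.
apply: leq_trans (leq_mul (card_congr_pairs_le_degF_leq_degB le_fb) (leqnn _)) _.
by rewrite -expnD; apply: leq_pexp2l; [exact: ltnW (card_finNzRing_gt1 K) | lia].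
Qed.

End CongruentPairs.

Definition tuple_poly (K : finFieldType) n (c : n.-tuple K) : {poly K} :=
  \poly_(i < n) (c : seq K)`_i.

Lemma tuple_poly_inj (K : finFieldType) n : injective (@tuple_poly K n).
Proof.
move=> c d eq_cd; apply: eq_from_tnth => i.
have := congr1 (fun p : {poly K} => p`_i) eq_cd.
by rewrite !coef_poly ltn_ord !(tnth_nth 0).
Qed.

Lemma pdeg_monicM (K : finFieldType) (p q : {poly K}) :
  p \is monic -> q \is monic -> pdeg (p * q) = (pdeg p + pdeg q)%N.
Proof.
move=> mp mq; rewrite /pdeg size_monicM ?monic_neq0 //.
by rewrite [in LHS](size_monic_pred mp) [in LHS](size_monic_pred mq) addSn addnS.
Qed.

Section S33Count.
Variables (K : finFieldType) (F H R : {poly K}) (z : nat).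

Definition S33_support (AB : (z.+1).-tuple K * (z.+1).-tuple K) : bool :=
  let A := tuple_poly AB.1 in let B := tuple_poly AB.2 in
  [&& A \is monic, B \is monic, pdeg (A * B) == z,
      F %| A * H - B, A * H != B & coprimep (A * B * H) R].

Lemma S33E (rT : rcfType) :
  S33 rT F H R z = #|[set AB | S33_support AB]|%:R / Num.sqrt ((#|K|%:R : rT) ^+ z).
Proof.
rewrite /S33 /polys_upto big_image /=.
under eq_bigr => c _.
  rewrite /image_mem big_map big_enum_cond /=.
  under eq_bigr => d /and4P[_ _ /eqP deg_AB _] do rewrite /pnorm -/(pdeg _) deg_AB.
  over.
rewrite pair_big_dep /= sumr_const div1r [RHS]mulr_natl.
by congr (_ *+ _); apply: eq_card => AB; rewrite inE.
Qed.

Lemma card_S33_support :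
  F \is monic -> H \is monic ->
  (#|[set AB | S33_support AB]| * #|K| ^ (size F).-1
     <= z.+1 * #|K| ^ (z + (size H).-1))%N.
Proof.
move=> monicF monicH.
pose degA (AB : (z.+1).-tuple K * (z.+1).-tuple K) : 'I_z.+1 :=
  inord (pdeg (tuple_poly AB.1)).
rewrite -sum1dep_card (partition_big degA xpredT) //= big_distrl /=.
rewrite -[X in (_ <= X * _)%N]card_ord -sum_nat_const.
apply: leq_sum => a _; rewrite sum1dep_card.
have le_az : (a <= z)%N by rewrite -ltnS.
rewrite (_ : z + (size H).-1 = a + (z - a) + (size H).-1)%N; last by lia.
apply: (card_congr_pairs_le (A := fun AB => tuple_poly AB.1)
                            (B := fun AB => tuple_poly AB.2) monicF monicH).
- move=> AB; rewrite inE => /andP[/and5P[mA mB /eqP deg_AB _ _] /eqP deg_a].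
  rewrite pdeg_monicM // in deg_AB.
  have pdeg_A : pdeg (tuple_poly AB.1) = a by rewrite -deg_a inordK //; lia.
  split=> //; rewrite size_monic_pred // -/(pdeg _).
    by rewrite pdeg_A.
  by apply/eqP; rewrite eqSS -(eqn_add2l (pdeg (tuple_poly AB.1))) deg_AB pdeg_A subnKC.
- by move=> AB; rewrite inE => /andP[/and5P[]].
- move=> [c1 d1] [c2 d2] _ _ /eqP; rewrite xpair_eqE /=.
  by case/andP=> /eqP/tuple_poly_inj-> /eqP/tuple_poly_inj->.
- by move=> AB; rewrite inE => /andP[/and5P[_ _ _ _ /andP[]]].
Qed.

End S33Count.

Theorem lemma3p3 (rT : rcfType) :
  exists C : rT, 0 < C /\
  forall (K : finFieldType), odd #|K| ->
  forall (F H R : {poly K}) (z : nat),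
    F \is monic -> H \is monic -> R \is monic ->
    F %| R -> (z < pdeg R)%N ->
    S33 rT F H R z <=
      C * (Num.sqrt ((#|K|%:R : rT) ^+ z) * (z.+1)%:R * pnorm rT H / pnorm rT F).
Proof.
exists 1; split=> // K _ F H R z monicF monicH _ _ _.
have := card_S33_support R z monicF monicH; rewrite -(ler_nat rT) !natrM !natrX.
rewrite S33E mul1r /pnorm; set q := (#|K|%:R : rT).
have q_gt0 : 0 < q by rewrite ltr0n; apply/card_gt0P; exists 0.
set s := Num.sqrt (q ^+ z).
have s_gt0 : 0 < s by rewrite sqrtr_gt0 exprn_gt0.
have sq_s : s ^+ 2 = q ^+ z by rewrite sqr_sqrtr ?exprn_ge0 ?ltW.
rewrite exprD -sq_s => count.
rewrite ler_pdivrMr // mulrAC ler_pdivlMr ?exprn_gt0 //.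
by rewrite (_ : _ * s = z.+1%:R * (s ^+ 2 * q ^+ (size H).-1)) //; ring.
Qed.
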